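(* Fix an integer $k\ge 0$, a link $i$ of a multi-link system, and $\#\in\{L,J\}$. Let $\mathfrak{V}_{L_i}^{(k+1)}=(V_0,\dots,V_{k+1})\in\mathbb{R}^{6(k+2)}$ be the comprehensive spatial velocity of link $i$ and $\mathfrak{V}_{L_i}^{(k)}=(V_0,\dots,V_k)$ its truncation, let $\mathfrak{h}_{\#_i}^{(k+1)}=(h_0,\dots,h_{k+1})\in\mathbb{R}^{6(k+2)}$ be the comprehensive (link or joint) momentum and $\mathfrak{h}_{\#_i}^{(k)}=(h_0,\dots,h_k)$ its truncation, and let the comprehensive force be $$\mathfrak{f}_{\#_i}^{(k)}=\mathfrak{U}\big([\mathfrak{V}_{L_i}^{(k)}\times^{*}_{6\cdot k}]\big)\,\mathfrak{h}_{\#_i}^{(k+1)}.$$ Suppose $\mathfrak{V}_{L_i}^{(k+1)}$ and $\mathfrak{h}_{\#_i}^{(k+1)}$ depend differentiably on a scalar parameter $\varepsilon$ and let $\delta$ denote $\frac{d}{d\varepsilon}$ at $\varepsilon=0$. Then $$\delta\mathfrak{f}_{\#_i}^{(k)}=\mathfrak{U}\big([\mathfrak{V}_{L_i}^{(k)}\times^{*}_{6\cdot k}]\big)\,\delta\mathfrak{h}_{\#_i}^{(k+1)}+\begin{bmatrix}[\mathfrak{h}_{\#_i}^{(k)}\,\hat{\times}^{*}_{6\cdot k}] & 0_{6(k+1)\times 6}\end{bmatrix}\delta\mathfrak{V}_{L_i}^{(k+1)}.$$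
   Context: Notation. For $u\in\mathbb{R}^3$, $[u\times]$ is the skew-symmetric cross-product matrix. For $u=(v_0,v_1)\in\mathbb{R}^6$, $[u\times_6]=\begin{bmatrix}[v_0\times]&0\\ [v_1\times]&[v_0\times]\end{bmatrix}$ and $[u\times^{*}_6]:=-[u\times_6]^{T}$. For a stacked vector $u=(u_0,\dots,u_k)\in\mathbb{R}^{6(k+1)}$, $[u\times^{*}_{6\cdot k}]$ is the block lower-triangular Toeplitz matrix with $(l,m)$ block $[u_{l-m}\times^{*}_6]$ for $l\ge m$ and zero blocks above the diagonal; $[x\,\hat{\times}^{*}_{6\cdot k}]$ is the matrix with $[x\,\hat{\times}^{*}_{6\cdot k}]\,y=[y\times^{*}_{6\cdot k}]\,x$ for all $y$. $N_{(1:k+1)}=\mathrm{diag}(1\cdot I_6,2\cdot I_6,\dots,(k+1)\cdot I_6)$. For $M\in\mathbb{R}^{6(k+1)\times 6(k+1)}$, $\mathfrak{U}(M):=\begin{bmatrix}M&0_{6(k+1)\times 6}\end{bmatrix}+\begin{bmatrix}0_{6(k+1)\times 6}&N_{(1:k+1)}\end{bmatrix}\in\mathbb{R}^{6(k+1)\times 6(k+2)}$. Comprehensive quantities are stacked vectors $(a,\tfrac{1}{1!}\dot a,\dots,\tfrac{1}{k!}a^{(k)})$ of a physical quantity and its scaled time derivatives; $\#=L$ refers to link quantities and $\#=J$ to quantities transmitted through the joint from the parent of link $i$ to link $i$, both expressed in the frame of link $i$. *)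

From HB Require Import structures.
From mathcomp Require Import all_boot all_order all_algebra.
From mathcomp Require Import all_classical all_reals all_analysis.
Set Implicit Arguments. Unset Strict Implicit. Unset Printing Implicit Defensive.
Import Order.TTheory GRing.Theory Num.Theory.
Local Open Scope ring_scope.

Section Defs.
Variable R : realType.

Definition cross3 (v : 'cV[R]_3) : 'M[R]_3 :=
  let v0 := v (@Ordinal 3 0 isT) 0 in let v1 := v (@Ordinal 3 1 isT) 0 in
  let v2 := v (@Ordinal 3 2 isT) 0 in
  \matrix_(i < 3, j < 3)
    nth 0 (nth [::] [:: [:: 0; - v2; v1];
                        [:: v2; 0; - v0];
                        [:: - v1; v0; 0]] i) j.

Definition cross6 (u : 'cV[R]_(3 + 3)) : 'M[R]_(3 + 3) :=
  block_mx (cross3 (usubmx u)) 0 (cross3 (dsubmx u)) (cross3 (usubmx u)).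

Definition crossstar6 (u : 'cV[R]_6) : 'M[R]_6 := - (cross6 u)^T.

Lemma bidx_proof n (a : 'I_(n * 6)) : (a %/ 6 < n)%N.
Proof. by rewrite ltn_divLR. Qed.
Definition bidx n (a : 'I_(n * 6)) : 'I_n := Ordinal (bidx_proof a).
Definition ridx n (a : 'I_(n * 6)) : 'I_6 := Ordinal (ltn_pmod a (isT : (0 < 6)%N)).

Lemma flat_proof n (l : 'I_n) (r : 'I_6) : (l * 6 + r < n * 6)%N.
Proof.
have := ltn_ord l; have := ltn_ord r; move: (nat_of_ord l) (nat_of_ord r) => x y.
move=> hy hx; apply: (@leq_trans (x * 6 + 6)); first by rewrite ltn_add2l.
by rewrite -mulSnr leq_mul2r hx orbT.
Qed.

Definition blk n (u : 'cV[R]_(n * 6)) (l : 'I_n) : 'cV[R]_6 :=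
  \col_(r < 6) u (Ordinal (flat_proof l r)) 0.

Definition crossstar6k k (u : 'cV[R]_(k.+1 * 6)) : 'M[R]_(k.+1 * 6) :=
  \matrix_(a, b)
    (if (bidx b <= bidx a)%N
     then crossstar6 (blk u (inord (bidx a - bidx b))) (ridx a) (ridx b)
     else 0).

(* [x ^x*_{6.k}] : the matrix with [x ^x*] y = [y x*] x for all y;
   its b-th column is [e_b x*] x *)
Definition hatcrossstar6k k (x : 'cV[R]_(k.+1 * 6)) : 'M[R]_(k.+1 * 6) :=
  \matrix_(a, b) (crossstar6k (delta_mx b 0) *m x) a 0.

Definition Nmat k : 'M[R]_(k.+1 * 6) :=
  \matrix_(a, b) (if a == b then ((bidx a).+1)%:R else 0).

Definition Ucast k : ((k.+1 * 6 + 6) = k.+2 * 6)%N := esym (mulSnr k.+1 6).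

Definition padR k (M : 'M[R]_(k.+1 * 6)) : 'M[R]_(k.+1 * 6, k.+2 * 6) :=
  castmx (erefl, Ucast k) (row_mx M (0 : 'M[R]_(k.+1 * 6, 6))).

Definition Umap k (M : 'M[R]_(k.+1 * 6)) : 'M[R]_(k.+1 * 6, k.+2 * 6) :=
  padR M + (row_mx (0 : 'M[R]_(k.+1 * 6, 6)) (Nmat k) : 'M[R]_(k.+1 * 6, k.+2 * 6)).

Definition trunc k (V : 'cV[R]_(k.+2 * 6)) : 'cV[R]_(k.+1 * 6) :=
  usubmx (castmx (esym (Ucast k), erefl 1%N) V).

End Defs.

From HB Require Import structures.
From mathcomp Require Import all_boot all_order all_algebra.
From mathcomp Require Import all_classical all_reals all_analysis.
From mathcomp Require Import ring.
Import Order.TTheory GRing.Theory Num.Theory numFieldNormedType.Exports.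
Local Open Scope ring_scope.

(* The force is the product of an affine function of the velocity,
   V |-> U([trunc V x*]), with the momentum h, so the product rule gives
   d f = U([trunc V x*]) d h + [[trunc dV x*] 0] h.  The second term is
   [trunc dV x*] (trunc h) = [trunc h ^x*] (trunc dV) = [[trunc h ^x*] 0] dV,
   by the defining property of the hat operator. *)

Section MatrixDerive.
Context {R : realFieldType} {U : normedModType R} {x v : U}.

Lemma is_derive_mxP {m n : nat} (M : U -> 'M[R]_(m, n)) dM :
  is_derive x v M dM <-> forall i j, is_derive x v (fun e => M e i j) (dM i j).
Proof.
split=> [[dMx <-] i j | dMij].
  apply: DeriveDef; first exact: (derivable_mxP M x v).1 dMx i j.
  by rewrite derive_mx // mxE.
have dMx : derivable M x v.
  by apply/derivable_mxP => i j; have [] := dMij i j.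
apply: DeriveDef => //; apply/matrixP => i j.
by rewrite derive_mx // mxE derive_val.
Qed.

Lemma is_derive_sum_pointwise {W : normedModType R} {n : nat}
    (F : 'I_n -> U -> W) dF :
  (forall i, is_derive x v (F i) (dF i)) ->
  is_derive x v (fun e => \sum_i F i e) (\sum_i dF i).
Proof. by move=> dFx; rewrite -fct_sumE; exact: is_derive_sum. Qed.

Lemma is_derive_mulmx {m n p : nat}
    {F : U -> 'M[R]_(m, n)} {G : U -> 'M[R]_(n, p)} {dF dG} :
  is_derive x v F dF -> is_derive x v G dG ->
  is_derive x v (fun e => F e *m G e) (dF *m G x + F x *m dG).
Proof.
move=> /is_derive_mxP dFx /is_derive_mxP dGx; apply/is_derive_mxP => i j.
under eq_fun do rewrite mxE.
rewrite !mxE -big_split; apply: is_derive_sum_pointwise => k /=.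
rewrite addrC [dF i k * _]mulrC; exact: is_deriveM (dFx i k) (dGx k j).
Qed.

Lemma linear_mxE {m n p q : nat} (L : {linear 'M[R]_(m, n) -> 'M[R]_(p, q)}) M i j :
  L M i j = \sum_a \sum_b M a b * L (delta_mx a b) i j.
Proof.
rewrite {1}[M]matrix_sum_delta linear_sum summxE; apply: eq_bigr => a _.
by rewrite linear_sum summxE; apply: eq_bigr => b _; rewrite linearZ mxE.
Qed.

Lemma is_derive_linear {m n p q : nat}
    (L : {linear 'M[R]_(m, n) -> 'M[R]_(p, q)}) {F dF} :
  is_derive x v F dF -> is_derive x v (fun e => L (F e)) (L dF).
Proof.
move=> /is_derive_mxP dFx; apply/is_derive_mxP => i j.
under eq_fun do rewrite linear_mxE.
rewrite linear_mxE; apply: is_derive_sum_pointwise => a.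
apply: is_derive_sum_pointwise => b.
under eq_fun do rewrite mulrC.
rewrite mulrC; exact: is_deriveZ (dFx a b).
Qed.

End MatrixDerive.

Lemma mul_castmx (R : pzRingType) m n n' p (e : n = n') (A : 'M[R]_(m, n)) B :
  castmx (erefl, e) A *m B = A *m castmx (esym e, erefl p) B.
Proof. by case: n' / e B => B; rewrite !castmx_id. Qed.

Section SpatialCross.
Context {R : realType}.

Lemma cross3_is_linear : linear (@cross3 R).
Proof.
move=> a u w; apply/matrixP => i j; rewrite !mxE.
by case: i => [[|[|[|i]]] Hi] //; case: j => [[|[|[|j]]] Hj] //=; rewrite ?mxE; ring.
Qed.
HB.instance Definition _ :=
  GRing.isLinear.Build R 'cV[R]_3 'M[R]_3 _ (@cross3 R) cross3_is_linear.

Lemma cross6_is_linear : linear (@cross6 R).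
Proof.
by move=> a u w; rewrite /cross6 !linearP scale_block_mx add_block_mx scaler0 addr0.
Qed.
HB.instance Definition _ :=
  GRing.isLinear.Build R 'cV[R]_(3 + 3) 'M[R]_(3 + 3) _ (@cross6 R) cross6_is_linear.

Lemma crossstar6_is_linear : linear (@crossstar6 R).
Proof. by move=> a u w; rewrite /crossstar6 cross6_is_linear linearP /= opprD scalerN. Qed.

Lemma blkP n l a (u w : 'cV[R]_(n * 6)) : blk (a *: u + w) l = a *: blk u l + blk w l.
Proof. by apply/matrixP => i j; rewrite !mxE. Qed.

Lemma crossstar6k_is_linear k : linear (@crossstar6k R k).
Proof.
move=> a u w; apply/matrixP => i j; rewrite !mxE.
case: ifP => _; last by rewrite mulr0 addr0.
set l := inord (bidx i - bidx j).
have /matrixP/(_ (ridx i) (ridx j)) := crossstar6_is_linear a (blk u l) (blk w l).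
by rewrite blkP !mxE.
Qed.
HB.instance Definition _ k :=
  GRing.isLinear.Build R _ _ _ (@crossstar6k R k) (@crossstar6k_is_linear k).

Lemma trunc_is_linear k : linear (@trunc R k).
Proof. by move=> a u w; apply/matrixP => i j; rewrite !(mxE, castmxE). Qed.
HB.instance Definition _ k :=
  GRing.isLinear.Build R _ _ _ (@trunc R k) (@trunc_is_linear k).

Lemma padR_is_linear k : linear (@padR R k).
Proof.
move=> a M N; apply/matrixP => i j; rewrite !(mxE, castmxE).
by case: fintype.split => j'; rewrite !mxE ?mulr0 ?addr0.
Qed.
HB.instance Definition _ k :=
  GRing.isLinear.Build R _ _ _ (@padR R k) (@padR_is_linear k).

Lemma mul_hatcrossstar6k {k : nat} (x y : 'cV[R]_(k.+1 * 6)) :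
  hatcrossstar6k x *m y = crossstar6k y *m x.
Proof.
rewrite [y in RHS]matrix_sum_delta linear_sum mulmx_suml.
rewrite {1}[y]matrix_sum_delta mulmx_sumr; apply: eq_bigr => b _.
rewrite !big_ord1 !linearZ /= -scalemxAl -colE.
by congr (_ *: _); apply/colP => a; rewrite !mxE.
Qed.

Lemma mul_padR {k : nat} (M : 'M[R]_(k.+1 * 6)) (w : 'cV[R]_(k.+2 * 6)) :
  padR M *m w = M *m trunc w.
Proof. by rewrite mul_castmx -[castmx _ w]vsubmxK mul_row_col mul0mx addr0. Qed.

Lemma is_derive_Umap {k : nat} {V : R -> 'cV[R]_(k.+2 * 6)} {x : R} {dV} :
  is_derive x 1 V dV ->
  is_derive x 1 (fun e => Umap (crossstar6k (trunc (V e))))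
    (padR (crossstar6k (trunc dV))).
Proof.
move=> dVx; rewrite -[padR _]addr0; apply: is_deriveD.
exact: (is_derive_linear (@padR R k \o @crossstar6k R k \o @trunc R k)).
Qed.

End SpatialCross.

Theorem lemma5 (R : realType) (k : nat)
  (V h : R -> 'cV[R]_(k.+2 * 6))
  (dV : forall e : R, derivable V e 1) (dh : forall e : R, derivable h e 1) :
  derive1 (fun e : R => Umap (crossstar6k (trunc (V e))) *m h e) 0 =
    Umap (crossstar6k (trunc (V 0))) *m (derive1 h 0)
    + padR (hatcrossstar6k (trunc (h 0))) *m (derive1 V 0).
Proof.
rewrite !derive1E.
have [_ ->] := is_derive_mulmx (is_derive_Umap (derivableP (dV 0))) (derivableP (dh 0)).
by rewrite addrC !mul_padR mul_hatcrossstar6k.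
Qed.
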